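(* There exists a network $G$ with three sources $s_1,s_2,s_3$ and three terminals $t_1,t_2,t_3$ in which every source–terminal pair $(s_i,t_j)$ is connected by at least one directed path, but for every finite field $\mathbb{F}$ with $|\mathbb{F}|\ge 2$ there is no network code (linear or nonlinear, scalar) over $\mathbb{F}$ under which every terminal can recover $X_1+X_2+X_3$ with zero error.
   Context: A network is a finite directed acyclic graph (parallel edges allowed) in which every edge has unit capacity and carries one symbol of a finite field $\mathbb{F}$ per use. Sources are vertices with no incoming edges; source $s_i$ holds $X_i\in\mathbb{F}$, the $X_i$ independent and uniformly distributed. Terminals are vertices with no outgoing edges. A (scalar) network code assigns to each edge leaving a source $s_i$ a function of $X_i$, and to each edge leaving a non-source vertex $v$ a function of the symbols on the edges entering $v$, with values in $\mathbb{F}$. A terminal recovers a quantity with zero error if that quantity is a (deterministic) function of the symbols on the terminal's incoming edges, for all values of the sources. *)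

From HB Require Import structures.
From mathcomp Require Import all_boot all_order all_algebra.
Set Implicit Arguments. Unset Strict Implicit. Unset Printing Implicit Defensive.
Import GRing.Theory.
Local Open Scope ring_scope.

Record network := Network {
  vertex : finType;
  edge : finType;
  tail : edge -> vertex;
  head : edge -> vertex }.

Definition adj (N : network) : rel (vertex N) :=
  fun u v => [exists e : edge N, (tail e == u) && (head e == v)].

Definition acyclic (N : network) : Prop :=
  forall e : edge N, ~ connect (@adj N) (head e) (tail e).

Definition dpath (N : network) (u v : vertex N) : Prop :=
  exists e : edge N, tail e = u /\ connect (@adj N) (head e) v.

Definition is_source (N : network) (v : vertex N) : Prop :=
  forall e : edge N, head e <> v.
Definition is_terminal (N : network) (v : vertex N) : Prop :=
  forall e : edge N, tail e <> v.

(* Sources are indexed by src : 'I_k -> vertex N.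
   src_enc e : the function of X_i put on an edge e leaving source s_i;
   enc e : the function put on an edge e leaving a non-source vertex, which is
   required to depend only on the symbols of the edges entering tail e. *)
Record network_code (N : network) (F : Type) := NetworkCode {
  src_enc : edge N -> F -> F;
  enc : edge N -> (edge N -> F) -> F;
  enc_local : forall e (y y' : edge N -> F),
    (forall e', head e' = tail e -> y e' = y' e') -> enc e y = enc e y' }.

(* y : edge N -> F is the family of edge symbols induced by the code c when
   the sources carry x. (In an acyclic network such y exists and is unique.) *)
Definition induced (N : network) (F : Type) (k : nat) (src : 'I_k -> vertex N)
    (c : network_code N F) (x : 'I_k -> F) (y : edge N -> F) : Prop :=
  forall e : edge N,
    (forall i, tail e = src i -> y e = src_enc c e (x i)) /\
    ((forall i, tail e <> src i) -> y e = enc c e y).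

Definition recovers (N : network) (F : Type) (k : nat) (src : 'I_k -> vertex N)
    (c : network_code N F) (t : vertex N) (q : ('I_k -> F) -> F) : Prop :=
  exists dec : (edge N -> F) -> F,
    (forall y y' : edge N -> F, (forall e, head e = t -> y e = y' e) -> dec y = dec y') /\
    forall (x : 'I_k -> F) (y : edge N -> F), induced src c x y -> dec y = q x.

From Pilot Require Import Defs.
From HB Require Import structures.
From mathcomp Require Import all_boot all_order all_algebra.
Import GRing.Theory.
Set Implicit Arguments.
Unset Strict Implicit.
Unset Printing Implicit Defensive.
Local Open Scope ring_scope.

(* In the network below, terminal 7 receives X3 directly and otherwise only the
   symbol f(X1, X2) carried by the edge 3 -> 5, so f(a, b) must determine a + b.
   Over a finite ring this forces f(a, b) = f(a + b, 0): s |-> f(s, 0) is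
   injective, hence onto. Symmetrically terminal 8 forces the symbol g(X2, X3)
   on the edge 4 -> 6 to depend on X2 + X3 only. Terminal 9 sees nothing but
   f and g, which agree on the inputs (1, 0, 0) and (0, 1, -1), whose sums
   differ. *)

Lemma ord_all n (P : pred nat) : all P (iota 0 n) -> forall i : 'I_n, P i.
Proof. by move=> /allP allP i; apply: allP; rewrite mem_iota ltn_ord. Qed.

Section Rank.
Variables (N : network) (rank : vertex N -> nat).
Hypothesis rank_edge : forall e, (rank (tail e) < rank (Defs.head e))%N.

Lemma connect_rank_le u v : connect (@adj N) u v -> (rank u <= rank v)%N.
Proof.
move/connectP=> [p uv_path ->]; elim: p u uv_path => //= w p IH u /andP[uw wp].
apply: leq_trans (IH w wp); apply: ltnW.
by case/existsP: uw => e /andP[/eqP <- /eqP <-].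
Qed.

Lemma acyclic_rank : acyclic N.
Proof. by move=> e /connect_rank_le; rewrite leqNgt rank_edge. Qed.

End Rank.

Section Flow.
Variables (N : network) (F : Type) (k : nat) (src : 'I_k -> vertex N).
Variable c : network_code N F.

Definition flow_step (x : 'I_k -> F) (y : edge N -> F) (e : edge N) : F :=
  if [pick i | tail e == src i] is Some i then src_enc c e (x i) else enc c e y.

Hypothesis src_inj : injective src.

Lemma induced_flow_step_fixpoint x y :
  (forall e, flow_step x y e = y e) -> induced src c x y.
Proof.
move=> fix_y e; split=> [i tail_e | not_src]; rewrite -fix_y /flow_step.
- by case: pickP => [j /eqP | /(_ i)]; rewrite tail_e ?eqxx // => /src_inj ->.
- by case: pickP => // j /eqP /not_src.
Qed.

Variables (rank : vertex N -> nat) (y0 : edge N -> F).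
Hypothesis rank_edge : forall e, (rank (tail e) < rank (Defs.head e))%N.

Lemma flow_step_iter_stable x n e : (rank (tail e) < n)%N ->
  iter n.+1 (flow_step x) y0 e = iter n (flow_step x) y0 e.
Proof.
elim: n e => // n IH e lt_e; rewrite iterS [RHS]/= /flow_step.
case: pickP => // _; apply: enc_local => e' head_e'; apply: IH.
by apply: leq_trans (rank_edge e') _; rewrite head_e'.
Qed.

Definition flow x := iter (\max_v (rank v).+1)%N (flow_step x) y0.

Lemma flow_induced x : induced src c x (flow x).
Proof.
apply: induced_flow_step_fixpoint => e; rewrite -iterS.
apply: flow_step_iter_stable; exact: (@leq_bigmax _ (fun v => (rank v).+1) (tail e)).
Qed.

End Flow.

Section Locality.
Variables (N : network) (F : Type) (k : nat) (src : 'I_k -> vertex N).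
Variables (c : network_code N F) (x x' : 'I_k -> F) (y y' : edge N -> F).
Hypotheses (Hy : induced src c x y) (Hy' : induced src c x' y').

Definition agree_into v := forall e, Defs.head e = v -> y e = y' e.

Lemma induced_eq_src e i : tail e = src i -> x i = x' i -> y e = y' e.
Proof. by move=> tail_e xi; rewrite ((Hy e).1 i tail_e) ((Hy' e).1 i tail_e) xi. Qed.

Lemma induced_eq_inner e :
  (forall i, tail e <> src i) -> agree_into (tail e) -> y e = y' e.
Proof.
move=> not_src agree; rewrite ((Hy e).2 not_src) ((Hy' e).2 not_src).
exact: enc_local.
Qed.

Lemma recovers_eq t q : recovers src c t q -> agree_into t -> q x = q x'.
Proof.
case=> dec [dec_local dec_q] agree.
by rewrite -(dec_q x y Hy) -(dec_q x' y' Hy'); apply: dec_local.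
Qed.

End Locality.

Section ArcNetwork.
Variables (n : nat) (s : seq (nat * nat)).
Hypothesis s_bounded : all (fun a => (a.1 < n) && (a.2 < n))%N s.

Definition arc (e : 'I_(size s)) : nat * nat := nth (0, 0)%N s e.

Lemma arc_in e : arc e \in s.
Proof. exact: mem_nth. Qed.

Lemma arc_tail_lt e : ((arc e).1 < n)%N.
Proof. by case/andP: (allP s_bounded _ (arc_in e)). Qed.

Lemma arc_head_lt e : ((arc e).2 < n)%N.
Proof. by case/andP: (allP s_bounded _ (arc_in e)). Qed.

Definition arc_network : network :=
  @Network 'I_n 'I_(size s) (fun e => Ordinal (arc_tail_lt e)) (fun e => Ordinal (arc_head_lt e)).

Lemma arc_onto a : a \in s -> exists e : edge arc_network, arc e = a.
Proof.
move=> sa; have lt_a : (index a s < size s)%N by rewrite index_mem.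
by exists (Ordinal lt_a); apply: nth_index.
Qed.

Lemma arc_inj : uniq s -> injective (arc : edge arc_network -> nat * nat).
Proof. by move=> s_uniq e e' /eqP; rewrite nth_uniq // => /eqP /val_inj. Qed.

Lemma arc_network_acyclic : all (fun a => a.1 < a.2)%N s -> acyclic arc_network.
Proof.
move=> s_incr; apply: (@acyclic_rank arc_network (@nat_of_ord n)) => e.
exact: (allP s_incr _ (arc_in e)).
Qed.

Lemma arc_network_source (v : vertex arc_network) :
  is_source v <-> all (fun a => a.2 != val v) s.
Proof.
split=> [src_v | /allP no_in e head_e].
- by apply/allP=> _ /arc_onto [e <-]; apply/eqP=> head_e; apply: (src_v e); apply: val_inj.
- by move: (no_in _ (arc_in e)); rewrite -head_e eqxx.
Qed.

Lemma arc_network_terminal (v : vertex arc_network) :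
  is_terminal v <-> all (fun a => a.1 != val v) s.
Proof.
split=> [tgt_v | /allP no_out e tail_e].
- by apply/allP=> _ /arc_onto [e <-]; apply/eqP=> tail_e; apply: (tgt_v e); apply: val_inj.
- by move: (no_out _ (arc_in e)); rewrite -tail_e eqxx.
Qed.

Lemma arc_into e (v : vertex arc_network) :
  Defs.head e = v -> arc e \in [seq a <- s | a.2 == val v].
Proof. by move=> <-; rewrite mem_filter arc_in andbT. Qed.

Fixpoint walk (m u v : nat) : bool :=
  if m is m'.+1 then has (fun a => (a.1 == u) && ((a.2 == v) || walk m' a.2 v)) s
  else false.

Lemma dpath_walk m (u v : vertex arc_network) : walk m (val u) (val v) -> dpath u v.
Proof.
elim: m u v => // m IH u v /hasP [_ /arc_onto [e <-] /andP [/eqP tail_e step]].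
exists e; split; first exact: val_inj.
case/orP: step => [/eqP head_e | /(IH (Defs.head e)) [e' [tail_e' head_v]]].
  by rewrite (_ : Defs.head e = v) ?connect0 //; apply: val_inj.
apply: connect_trans head_v; apply: connect1.
by apply/existsP; exists e'; rewrite tail_e' !eqxx.
Qed.

End ArcNetwork.

Lemma sum_factor (V : finZmodType) (f : V -> V -> V) :
  (forall a b a' b', f a b = f a' b' -> a + b = a' + b') ->
  forall a b, f a b = f (a + b) 0.
Proof.
move=> f_sum a b.
have /injF_bij [g _ gK] : injective (fun s => f s 0).
  by move=> s s' /f_sum; rewrite !addr0.
have fg : f (g (f a b)) 0 = f a b := gK (f a b).
by move: (f_sum _ _ _ _ fg); rewrite addr0 => <-.
Qed.

Lemma cut_sums_not_total (R : finNzRingType) (f g : R -> R -> R) :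
  (forall a b a' b', f a b = f a' b' -> a + b = a' + b') ->
  (forall b d b' d', g b d = g b' d' -> b + d = b' + d') ->
  ~ (forall a b d a' b' d',
       f a b = f a' b' -> g b d = g b' d' -> a + b + d = a' + b' + d').
Proof.
move=> f_sum g_sum total.
have f10 : f 1 0 = f 0 1 by rewrite [LHS](sum_factor f_sum) [RHS](sum_factor f_sum) addr0 add0r.
have g0 : g 0 0 = g 1 (-1) by rewrite [LHS](sum_factor g_sum) [RHS](sum_factor g_sum) addr0 subrr.
have /eqP := total _ _ _ _ _ _ f10 g0.
by rewrite !addr0 add0r subrr oner_eq0.
Qed.

(* Vertices 0, 1, 2 are the sources and 7, 8, 9 the terminals. *)
Definition sum_arcs : seq (nat * nat) :=
  [:: (0, 3); (1, 3); (1, 4); (2, 4); (3, 5); (4, 6);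
      (5, 7); (2, 7); (6, 8); (0, 8); (5, 9); (6, 9)]%N.

Lemma sum_arcs_bounded : all (fun a => (a.1 < 10) && (a.2 < 10))%N sum_arcs.
Proof. by []. Qed.

Lemma sum_arcs_increasing : all (fun a => a.1 < a.2)%N sum_arcs.
Proof. by []. Qed.

Definition sum_network : network := arc_network sum_arcs_bounded.

Definition sum_src (i : 'I_3) : vertex sum_network := widen_ord (isT : (3 <= 10)%N) i.
Definition sum_tgt (j : 'I_3) : vertex sum_network := rshift 7 j.

Lemma sum_src_inj : injective sum_src.
Proof. by move=> i j [/val_inj]. Qed.

Lemma sum_tgt_inj : injective sum_tgt.
Proof. by move=> i j [/addnI /val_inj]. Qed.

Lemma sum_src_val (v : vertex sum_network) : (exists i, v = sum_src i) <-> (val v < 3)%N.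
Proof.
split=> [[i ->] | lt_v3]; first exact: (ltn_ord i).
by exists (Ordinal lt_v3); apply: val_inj.
Qed.

Lemma sum_tgt_val (v : vertex sum_network) : (exists j, v = sum_tgt j) <-> (7 <= val v)%N.
Proof.
split=> [[j ->] | le7v]; first exact: leq_addr.
have lt_v7 : (val v - 7 < 3)%N by rewrite ltn_subLR // (ltn_ord v).
by exists (Ordinal lt_v7); apply: val_inj; rewrite /= subnKC.
Qed.

Lemma sum_network_source v : is_source v <-> exists i, v = sum_src i.
Proof.
have /eqP no_in := ord_all
  (isT : all (fun m => all (fun a => a.2 != m) sum_arcs == (m < 3))%N (iota 0 10)) v.
apply: iff_trans (arc_network_source v) _; rewrite no_in.
exact: iff_sym (sum_src_val v).
Qed.

Lemma sum_network_terminal v : is_terminal v <-> exists j, v = sum_tgt j.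
Proof.
have /eqP no_out := ord_all
  (isT : all (fun m => all (fun a => a.1 != m) sum_arcs == (7 <= m))%N (iota 0 10)) v.
apply: iff_trans (arc_network_terminal v) _; rewrite no_out.
exact: iff_sym (sum_tgt_val v).
Qed.

Lemma sum_network_dpath i j : dpath (sum_src i) (sum_tgt j).
Proof.
apply: (@dpath_walk _ _ sum_arcs_bounded 3).
exact: (ord_all (ord_all (isT : all (fun i =>
  all (fun j => walk sum_arcs 3 i (7 + j)) (iota 0 3)) (iota 0 3)) i) j).
Qed.

Lemma sum_inner_not_src (v : vertex sum_network) :
  (3 <= val v)%N -> forall i, v <> sum_src i.
Proof. by move=> le3v i v_i; move: le3v; rewrite v_i leqNgt (ltn_ord i). Qed.

Definition bottleneck12 : edge sum_network := @Ordinal 12 4 isT.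
Definition bottleneck23 : edge sum_network := @Ordinal 12 5 isT.

Lemma into_relay12 e (v : vertex sum_network) :
  Defs.head e = v -> val v = 5%N -> e = bottleneck12.
Proof.
move=> /arc_into + v5; rewrite v5 /= inE => /eqP arc_e.
by apply: (arc_inj (isT : uniq sum_arcs)); rewrite arc_e.
Qed.

Lemma into_relay23 e (v : vertex sum_network) :
  Defs.head e = v -> val v = 6%N -> e = bottleneck23.
Proof.
move=> /arc_into + v6; rewrite v6 /= inE => /eqP arc_e.
by apply: (arc_inj (isT : uniq sum_arcs)); rewrite arc_e.
Qed.

Section Agreement.
Variables (R : Type) (c : network_code sum_network R).
Variables (x x' : 'I_3 -> R) (y y' : edge sum_network -> R).
Hypotheses (Hy : induced sum_src c x y) (Hy' : induced sum_src c x' y').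

Lemma agree_src_arc (e : edge sum_network) (i : 'I_3) :
  (arc e).1 = val i -> x i = x' i -> y e = y' e.
Proof. by move=> arc_e; apply: (induced_eq_src Hy Hy'); apply: val_inj. Qed.

Lemma agree_inner_arc (e : edge sum_network) :
  (3 <= (arc e).1)%N -> agree_into y y' (tail e) -> y e = y' e.
Proof. by move=> le3; apply: (induced_eq_inner Hy Hy'); apply: sum_inner_not_src. Qed.

Lemma bottleneck12_eq : x 0 = x' 0 -> x 1 = x' 1 -> y bottleneck12 = y' bottleneck12.
Proof.
move=> x0 x1; apply: agree_inner_arc => // e /arc_into; rewrite /= !inE.
by case/orP=> /eqP arc_e; [apply: (agree_src_arc (i := 0)) | apply: (agree_src_arc (i := 1))];
  rewrite ?arc_e.
Qed.

Lemma bottleneck23_eq : x 1 = x' 1 -> x 2 = x' 2 -> y bottleneck23 = y' bottleneck23.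
Proof.
move=> x1 x2; apply: agree_inner_arc => // e /arc_into; rewrite /= !inE.
by case/orP=> /eqP arc_e; [apply: (agree_src_arc (i := 1)) | apply: (agree_src_arc (i := 2))];
  rewrite ?arc_e.
Qed.

Lemma agree_relay12 (e : edge sum_network) :
  (arc e).1 = 5%N -> y bottleneck12 = y' bottleneck12 -> y e = y' e.
Proof.
move=> arc_e b12; apply: agree_inner_arc; first by rewrite arc_e.
by move=> e' /into_relay12 ->.
Qed.

Lemma agree_relay23 (e : edge sum_network) :
  (arc e).1 = 6%N -> y bottleneck23 = y' bottleneck23 -> y e = y' e.
Proof.
move=> arc_e b23; apply: agree_inner_arc; first by rewrite arc_e.
by move=> e' /into_relay23 ->.
Qed.

Lemma agree_tgt0 :
  y bottleneck12 = y' bottleneck12 -> x 2 = x' 2 -> agree_into y y' (sum_tgt 0).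
Proof.
move=> b12 x2 e /arc_into; rewrite /= !inE => /orP [] /eqP arc_e.
  by apply: agree_relay12; rewrite ?arc_e.
by apply: (agree_src_arc (i := 2)); rewrite ?arc_e.
Qed.

Lemma agree_tgt1 :
  y bottleneck23 = y' bottleneck23 -> x 0 = x' 0 -> agree_into y y' (sum_tgt 1).
Proof.
move=> b23 x0 e /arc_into; rewrite /= !inE => /orP [] /eqP arc_e.
  by apply: agree_relay23; rewrite ?arc_e.
by apply: (agree_src_arc (i := 0)); rewrite ?arc_e.
Qed.

Lemma agree_tgt2 : y bottleneck12 = y' bottleneck12 ->
  y bottleneck23 = y' bottleneck23 -> agree_into y y' (sum_tgt 2).
Proof.
move=> b12 b23 e /arc_into; rewrite /= !inE => /orP [] /eqP arc_e.
  by apply: agree_relay12; rewrite ?arc_e.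
by apply: agree_relay23; rewrite ?arc_e.
Qed.

End Agreement.

Section SumNetworkCode.
Variables (R : finNzRingType) (c : network_code sum_network R).

Definition inputs (a b d : R) : 'I_3 -> R := fun i => nth 0 [:: a; b; d] i.

Lemma sum_inputs a b d : \sum_(i < 3) inputs a b d i = a + b + d.
Proof. by rewrite !big_ord_recr big_ord0 /= add0r. Qed.

Definition sum_flow x := flow sum_src c (@nat_of_ord 10) (fun=> 0) x.

Lemma sum_flow_induced x : induced sum_src c x (sum_flow x).
Proof.
apply: flow_induced => [|e]; first exact: sum_src_inj.
exact: (allP sum_arcs_increasing _ (arc_in e)).
Qed.

Definition cut12 a b := sum_flow (inputs a b 0) bottleneck12.
Definition cut23 b d := sum_flow (inputs 0 b d) bottleneck23.

Lemma cut12_flow a b d : sum_flow (inputs a b d) bottleneck12 = cut12 a b.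
Proof. exact: bottleneck12_eq (sum_flow_induced _) (sum_flow_induced _) _ _. Qed.

Lemma cut23_flow a b d : sum_flow (inputs a b d) bottleneck23 = cut23 b d.
Proof. exact: bottleneck23_eq (sum_flow_induced _) (sum_flow_induced _) _ _. Qed.

Lemma sum_network_no_code :
  ~ forall j, recovers sum_src c (sum_tgt j) (fun x => \sum_(i < 3) x i).
Proof.
move=> rec.
have sum_eq j a b d a' b' d' :
    agree_into (sum_flow (inputs a b d)) (sum_flow (inputs a' b' d')) (sum_tgt j) ->
    a + b + d = a' + b' + d'.
  by move/(recovers_eq (sum_flow_induced _) (sum_flow_induced _) (rec j)); rewrite !sum_inputs.
apply: (@cut_sums_not_total _ cut12 cut23).
- move=> a b a' b' eq12; have := sum_eq 0 a b 0 a' b' 0; rewrite !addr0; apply.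
  exact: agree_tgt0 (sum_flow_induced _) (sum_flow_induced _) eq12 _.
- move=> b d b' d' eq23; have := sum_eq 1 0 b d 0 b' d'; rewrite !add0r; apply.
  exact: agree_tgt1 (sum_flow_induced _) (sum_flow_induced _) eq23 _.
- move=> a b d a' b' d' eq12 eq23; apply: (sum_eq 2).
  apply: agree_tgt2 (sum_flow_induced _) (sum_flow_induced _) _ _.
    by rewrite !cut12_flow.
  by rewrite !cut23_flow.
Qed.

End SumNetworkCode.

Theorem mainTheorem5 :
  exists (N : network) (src tgt : 'I_3 -> vertex N),
    acyclic N /\ injective src /\ injective tgt /\
    (forall v, is_source v <-> exists i, v = src i) /\
    (forall v, is_terminal v <-> exists j, v = tgt j) /\
    (forall i j, dpath (src i) (tgt j)) /\
    forall F : finFieldType, (2 <= #|F|)%N ->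
      ~ exists c : network_code N F,
          forall j, recovers src c (tgt j) (fun x => \sum_(i < 3) x i).
Proof.
exists sum_network, sum_src, sum_tgt.
split; first exact: arc_network_acyclic sum_arcs_increasing.
split; first exact: sum_src_inj.
split; first exact: sum_tgt_inj.
split; first exact: sum_network_source.
split; first exact: sum_network_terminal.
split; first exact: sum_network_dpath.
by move=> F _ [c]; apply: sum_network_no_code.
Qed.
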